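(* Let $\phi\in\mathrm{QJac}_L$. Then for all $\lambda,\mu\in\mathbb Z^n$, \[ \phi(z+\lambda\tau+\mu,\tau) = e\left(-\lambda^TL\lambda\tau-2\lambda^TLz\right)\sum_{i\ge0}\frac{(-1)^i}{i!}\mathsf T_\lambda^i\phi(z,\tau) = e\left(-\lambda^TL\lambda\tau-2\lambda^TLz\right)\exp(-\mathsf T_\lambda)\phi(z,\tau). \]
   Context: Notation: $e(x) = \exp(2\pi ix)$, $q = e(\tau)$, $\tau\in\mathbb H$, $z\in\mathbb C^n$; $L$ is a rational symmetric $n\times n$ matrix with $2L$ integral with even diagonal. Let $\nu = 1/(8\pi\mathrm{Im}\tau)$ and $\alpha_i = \mathrm{Im}z_i/\mathrm{Im}\tau$. An almost holomorphic weak Jacobi form of weight $k$ and index $L$ is a finite sum $\Phi = \sum_{i,j}\phi_{i,j}(z,\tau)\nu^i\alpha^j$ ($j\in\mathbb Z_{\ge0}^n$, $\alpha^j = \prod\alpha_l^{j_l}$), each $\phi_{i,j}$ holomorphic with Fourier expansion $\sum_{m\ge0}\sum_{r\in\mathbb Z^n}c(m,r)q^me(z\cdot r)$ in $|q|<1$, satisfying $\Phi(\frac z{c\tau+d},\frac{a\tau+b}{c\tau+d}) = (c\tau+d)^ke(\frac{cz^TLz}{c\tau+d})\Phi(z,\tau)$ for all $\begin{pmatrix} a&b\\c&d\end{pmatrix}\in SL_2(\mathbb Z)$ and $\Phi(z+\lambda\tau+\mu,\tau) = e(-\lambda^TL\lambda\tau-2\lambda^TLz)\Phi(z,\tau)$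 for $\lambda,\mu\in\mathbb Z^n$. A quasi-Jacobi form of weight $k$ and index $L$ is $\phi = \phi_{0,0}$ for such a $\Phi$ (which is then unique, the completion of $\phi$); $\mathrm{QJac}_{k,L}$ is their space and $\mathrm{QJac}_L = \bigoplus_k\mathrm{QJac}_{k,L}$. Treating $\tau,\nu,z_i,\alpha_i$ as independent variables, $\mathsf T_{\alpha_i}\phi$ is the quasi-Jacobi form whose completion is $\frac{\partial\Phi}{\partial\alpha_i}$ (i.e. the constant term of $\partial\Phi/\partial\alpha_i$), and $\mathsf T_\lambda = \sum_i\lambda_i\mathsf T_{\alpha_i}$ for $\lambda\in\mathbb Z^n$. *)

From HB Require Import structures.
From mathcomp Require Import all_boot all_order all_algebra.
From mathcomp Require Import reals sequences exp trigo.
From mathcomp Require Import complex.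
Set Implicit Arguments. Unset Strict Implicit. Unset Printing Implicit Defensive.
Import Order.TTheory GRing.Theory Num.Theory.
Local Open Scope ring_scope.

Section QJ.
Variable R : realType.
Local Notation C := R[i].

Definition cR (x : R) : C := Complex x 0.
Definition ci : C := Complex 0 1.
Definition re (x : C) : R := let: Complex a _ := x in a.
Definition im (x : C) : R := let: Complex _ b := x in b.

Definition cmod (x : C) : R := Num.sqrt (re x ^+ 2 + im x ^+ 2).

Definition cexp (w : C) : C :=
  Complex (expR (re w) * cos (im w)) (expR (re w) * sin (im w)).

Definition ee (x : C) : C := cexp (cR (2 * pi) * ci * x).

Variable n : nat.
Local Notation vec := ('I_n -> C).

Definition nu (tau : C) : C := cR ((8 * pi * im tau)^-1).
Definition alpha (z : vec) (tau : C) (a : 'I_n) : C := cR (im (z a) / im tau).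

Definition good_index (L : 'M[rat]_n) : Prop :=
  L^T = L /\
  (forall a b, exists m : int, 2 * L a b = m%:~R) /\
  (forall a, exists m : int, 2 * L a a = (2 * m)%:~R).

Definition Lq (L : 'M[rat]_n) (u v : vec) : C :=
  \sum_(a < n) \sum_(b < n) u a * ratr (L a b) * v b.

Definition ivec (l : 'I_n -> int) : vec := fun a => (l a)%:~R.

Definition holomorphic (f : vec -> C -> C) : Prop :=
  forall (z : vec) (tau : C), 0 < im tau ->
  exists (dz : vec) (dtau : C),
  forall eps : R, 0 < eps -> exists2 delta : R, 0 < delta &
  forall (h : vec) (k : C), (forall a, cmod (h a) < delta) -> cmod k < delta ->
    0 < im (tau + k) ->
    cmod (f (fun a => z a + h a) (tau + k) - f z tau
          - \sum_(a < n) dz a * h a - dtau * k)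
    <= eps * (\sum_(a < n) cmod (h a) + cmod k).

(* the (m, r)-term of a Fourier expansion, with r in [-N, N]^n encoded *)
Definition fterm (c : nat -> {ffun 'I_n -> int} -> C) (z : vec) (tau : C)
  (N m : nat) (r : {ffun 'I_n -> 'I_(N.*2.+1)}) : C :=
  let r' := [ffun a => (r a)%:Z - N%:Z] in
  c m r' * ee (m%:R * tau + \sum_(a < n) (r' a)%:~R * z a).

(* f(z,tau) = sum_{m >= 0} sum_{r in Z^n} c(m,r) q^m e(z.r) for all z and
   tau in H (|q| < 1), the family being absolutely summable: partial sums over
   the boxes {0..N-1} x [-N,N]^n converge to f(z,tau) and the sums of moduli
   are bounded. *)
Definition fourier_expansion (f : vec -> C -> C) : Prop :=
  exists c : nat -> {ffun 'I_n -> int} -> C,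
  forall (z : vec) (tau : C), 0 < im tau ->
    (exists B : R, forall N : nat,
       \sum_(m < N) \sum_(r : {ffun 'I_n -> 'I_(N.*2.+1)})
          cmod (fterm c z tau m r) <= B) /\
    (forall eps : R, 0 < eps -> exists N0 : nat, forall N : nat, (N0 <= N)%N ->
       cmod (\sum_(m < N) \sum_(r : {ffun 'I_n -> 'I_(N.*2.+1)})
                fterm c z tau m r - f z tau) < eps).

(* A finite sum  Phi = sum_{i,j} phi_{i,j} nu^i alpha^j  is given by a
   degree bound D and a coefficient family phi i j (j a multi-index in N^n)
   vanishing outside i <= D, j <= D componentwise. *)
Definition coef_family := nat -> {ffun 'I_n -> nat} -> vec -> C -> C.

Definition bounded_support (D : nat) (phi : coef_family) : Prop :=
  forall (i : nat) (j : {ffun 'I_n -> nat}), ((D < i)%N || [exists a, (D < j a)%N]) -> phi i j = fun _ _ => 0.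

Definition mindex (D : nat) (j : {ffun 'I_n -> 'I_D.+1}) : {ffun 'I_n -> nat} :=
  [ffun a => nat_of_ord (j a)].

Definition eval_ah (D : nat) (phi : coef_family) (z : vec) (tau : C) : C :=
  \sum_(i < D.+1) \sum_(j : {ffun 'I_n -> 'I_D.+1})
     phi i (mindex j) z tau * nu tau ^+ i *
     \prod_(a < n) alpha z tau a ^+ (mindex j a).

Definition ah_weak_jacobi (k : int) (L : 'M[rat]_n) (D : nat)
    (phi : coef_family) : Prop :=
  bounded_support D phi /\
  (forall i j, holomorphic (phi i j) /\ fourier_expansion (phi i j)) /\
  (forall a b c d : int, a * d - b * c = 1 ->
     forall (z : vec) (tau : C), 0 < im tau ->
     let ct := c%:~R * tau + d%:~R in
     eval_ah D phi (fun l => z l / ct) ((a%:~R * tau + b%:~R) / ct)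
       = ct ^ k * ee (c%:~R * Lq L z z / ct) * eval_ah D phi z tau) /\
  (forall lam mu : 'I_n -> int, forall (z : vec) (tau : C), 0 < im tau ->
     eval_ah D phi (fun l => z l + (lam l)%:~R * tau + (mu l)%:~R) tau
       = ee (- (Lq L (ivec lam) (ivec lam) * tau) - 2 * Lq L (ivec lam) z)
         * eval_ah D phi z tau).

(* the quasi-Jacobi form phi_{0,0} of a completion *)
Definition mzero : {ffun 'I_n -> nat} := [ffun => 0%N].
Definition qj_part (phi : coef_family) : vec -> C -> C := phi 0%N mzero.

(* formal derivative d/d alpha_l (nu, alpha, z, tau independent) *)
Definition bump (j : {ffun 'I_n -> nat}) (l : 'I_n) : {ffun 'I_n -> nat} :=
  [ffun a => if a == l then (j a).+1 else j a].

(* d/d lambda := sum_l lambda_l d/d alpha_l acting on the coefficients *)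
Definition dlam (lam : 'I_n -> int) (phi : coef_family) : coef_family :=
  fun i j z tau =>
    \sum_(l < n) (lam l)%:~R * ((j l).+1)%:R * phi i (bump j l) z tau.

(* T_lambda^m phi : the quasi-Jacobi form whose completion is
   (d/d lambda)^m Phi, i.e. the constant term of (d/d lambda)^m Phi *)
Definition Tlam_pow (lam : 'I_n -> int) (m : nat) (phi : coef_family) :
  vec -> C -> C := qj_part (iter m (dlam lam) phi).

End QJ.
Arguments ivec {R n} l a.
Arguments Tlam_pow {R n} lam m phi.

From Pilot Require Import Defs.
From mathcomp Require Import all_boot all_order all_algebra.
From mathcomp Require Import reals sequences exp trigo.
From mathcomp Require Import complex.
From mathcomp Require Import boolp classical_sets topology normedtype derive realfun.
From mathcomp Require Import ring lra zify.
Import Order.TTheory GRing.Theory Num.Theory.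
Import numFieldNormedType.Exports.
Set Implicit Arguments. Unset Strict Implicit. Unset Printing Implicit Defensive.
Local Open Scope ring_scope.

(* Write Phi = sum_{i,j} phi_{i,j} nu^i alpha^j.  Translating z by lam tau + mu fixes nu
   and shifts alpha by lam, so after a binomial re-expansion in alpha the elliptic
   transformation law becomes a relation sum_{i,k} H_{i,k} nu^i alpha^k = 0 with
   holomorphic coefficients H_{i,k}.  Such a relation is trivial: along real lines nu and
   alpha are constant, while along imaginary lines (8 pi Im tau)^D nu^i alpha^k is a
   polynomial, so the Cauchy-Riemann equations of the H_{i,k} give the same relation with
   H_{i,k} weighted by D - i or by k_l, and a polynomial filter in these degrees isolates
   H_{0,0} = 0.  This says phi(z + lam tau + mu) = e(..) sum_j phi_{0,j}(z) (-lam)^j, and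
   the sum is exp(-T_lam) phi because T_lam acts on t |-> sum_j phi_{0,j}(z) (t lam)^j,
   a polynomial of degree at most n D, as d/dt. *)

Section ComplexFacts.
Variable R : realType.
Local Notation C := R[i].

Lemma cRE (x : R) : cR x = x%:C%C. Proof. by []. Qed.
Lemma cRD (x y : R) : cR (x + y) = cR x + cR y. Proof. by rewrite !cRE rmorphD. Qed.
Lemma cRB (x y : R) : cR (x - y) = cR x - cR y. Proof. by rewrite !cRE rmorphB. Qed.
Lemma cRN (x : R) : cR (- x) = - cR x. Proof. by rewrite !cRE rmorphN. Qed.
Lemma cRM (x y : R) : cR (x * y) = cR x * cR y. Proof. by rewrite !cRE rmorphM. Qed.
Lemma cRV (x : R) : cR x^-1 = (cR x)^-1. Proof. by rewrite !cRE fmorphV. Qed.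
Lemma cR0 : cR 0 = 0 :> C. Proof. by []. Qed.
Lemma cR1 : cR 1 = 1 :> C. Proof. by []. Qed.
Lemma cR_nat (k : nat) : cR k%:R = k%:R :> C. Proof. by rewrite cRE rmorph_nat. Qed.
Lemma cR_int (k : int) : cR k%:~R = k%:~R :> C. Proof. by rewrite cRE rmorph_int. Qed.
Lemma cR_rat (q : rat) : cR (ratr q) = ratr q :> C. Proof. by rewrite cRE fmorph_rat. Qed.
Lemma cR_sum (I : Type) (r : seq I) (F : I -> R) :
  cR (\sum_(i <- r) F i) = \sum_(i <- r) cR (F i).
Proof. by rewrite cRE rmorph_sum. Qed.
Lemma cR_inj : injective (@cR R). Proof. by move=> x y []. Qed.

Lemma cR_8pi_neq0 (y : R) : 0 < y -> cR (8 * pi * y) != 0.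
Proof.
by move=> y0; rewrite -cR0 (inj_eq cR_inj) !mulf_neq0 ?gt_eqF ?pi_gt0.
Qed.

Lemma ci2 : ci R * ci R = -1.
Proof. by apply/eqP; rewrite eq_complex /= !(mul0r, mulr0, mul1r, subr0, add0r, oppr0) !eqxx. Qed.

Lemma reD (x y : C) : re (x + y) = re x + re y. Proof. by case: x; case: y. Qed.
Lemma imD (x y : C) : im (x + y) = im x + im y. Proof. by case: x; case: y. Qed.
Lemma imB (x y : C) : im (x - y) = im x - im y. Proof. by case: x; case: y. Qed.
Lemma re_cR (r : R) : re (cR r) = r. Proof. by []. Qed.
Lemma im_cR (r : R) : im (cR r) = 0. Proof. by []. Qed.
Lemma re_cicR (r : R) : re (ci R * cR r) = 0. Proof. by rewrite /= !mul0r mulr0 subrr. Qed.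
Lemma im_cicR (r : R) : im (ci R * cR r) = r. Proof. by rewrite /= !mul0r mul1r add0r. Qed.
Lemma im_cRM (r : R) (x : C) : im (cR r * x) = r * im x.
Proof. by case: x => a b; rewrite /= mul0r addr0. Qed.

Lemma cmodE (x : C) : cmod x = Normc.normc x. Proof. by case: x. Qed.
Lemma cmod_ge0 (x : C) : 0 <= cmod x. Proof. exact: sqrtr_ge0. Qed.
Lemma cmod0 : cmod (0 : C) = 0. Proof. by rewrite cmodE Normc.normc0. Qed.
Lemma cmod_eq0 (x : C) : cmod x = 0 -> x = 0. Proof. by rewrite cmodE => /Normc.eq0_normc. Qed.
Lemma cmodN (x : C) : cmod (- x) = cmod x. Proof. by rewrite !cmodE normcN. Qed.
Lemma cmodM (x y : C) : cmod (x * y) = cmod x * cmod y. Proof. by rewrite !cmodE Normc.normcM. Qed.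
Lemma cmodD (x y : C) : cmod (x + y) <= cmod x + cmod y. Proof. by rewrite !cmodE le_normcD. Qed.
Lemma cmod_cR (r : R) : cmod (cR r) = `|r|.
Proof. by rewrite /cmod /= expr0n /= addr0 sqrtr_sqr. Qed.
Lemma cmod_ci : cmod (ci R) = 1.
Proof. by rewrite /cmod /= expr0n /= add0r expr1n sqrtr1. Qed.
Lemma cmod1 : cmod (1 : C) = 1. Proof. by rewrite -cR1 cmod_cR normr1. Qed.

Lemma cmod_le_re_im (x : C) : cmod x <= `|re x| + `|im x|.
Proof.
have h : 0 <= `|re x| + `|im x| by rewrite addr_ge0.
rewrite /cmod -[X in _ <= X](ger0_norm h) -sqrtr_sqr ler_sqrt ?sqr_ge0 //.
rewrite sqrrD !real_normK ?num_real //.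
have := mulr_ge0 (normr_ge0 (re x)) (normr_ge0 (im x)); lra.
Qed.

Lemma abs_im_le_cmod (x : C) : `|im x| <= cmod x.
Proof.
rewrite /cmod -sqrtr_sqr ler_sqrt ?addr_ge0 ?sqr_ge0 //.
by rewrite lerDr sqr_ge0.
Qed.

Lemma cmod_le0 (x : C) : (forall eps, 0 < eps -> cmod x <= eps) -> x = 0.
Proof.
move=> h; apply: cmod_eq0; apply/eqP; rewrite eq_le cmod_ge0 andbT.
rewrite leNgt; apply/negP => hx.
have := h _ (divr_gt0 hx (ltr0n _ 2)); lra.
Qed.

End ComplexFacts.

Section Deriv0.
Variable R : realType.
Local Notation C := R[i].

Definition has_deriv0 (F : R -> C) (F0 D : C) := forall eps : R, 0 < eps ->
  exists2 d : R, 0 < d &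
  forall t : R, `|t| < d -> cmod (F t - F0 - cR t * D) <= eps * `|t|.

Lemma eq_has_deriv0 F G F0 G0 D E :
  (forall t, F t = G t) -> F0 = G0 -> D = E ->
  has_deriv0 F F0 D -> has_deriv0 G G0 E.
Proof.
move=> FG <- <- hF eps e0; have [d d0 hd] := hF eps e0.
by exists d => // t ht; rewrite -FG; apply: hd.
Qed.

Lemma has_deriv0_cst c : has_deriv0 (fun _ => c) c 0.
Proof.
move=> eps e0; exists 1 => // t _.
by rewrite subrr mulr0 subr0 cmod0 mulr_ge0 // ltW.
Qed.

Lemma has_deriv0_id : has_deriv0 (@cR R) 0 1.
Proof.
move=> eps e0; exists 1 => // t _.
by rewrite subr0 mulr1 subrr cmod0 mulr_ge0 // ltW.
Qed.

Lemma has_deriv0_add F G F0 G0 D E : has_deriv0 F F0 D -> has_deriv0 G G0 E ->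
  has_deriv0 (fun t => F t + G t) (F0 + G0) (D + E).
Proof.
move=> hF hG eps e0.
have e2 : 0 < eps / 2 by rewrite divr_gt0.
have [d1 d10 h1] := hF _ e2; have [d2 d20 h2] := hG _ e2.
exists (Num.min d1 d2) => [|t]; first by rewrite lt_min d10.
rewrite lt_min => /andP[/h1 t1 /h2 t2].
have -> : F t + G t - (F0 + G0) - cR t * (D + E) =
  (F t - F0 - cR t * D) + (G t - G0 - cR t * E) by ring.
apply: le_trans (cmodD _ _) _; lra.
Qed.

Lemma has_deriv0_lipschitz F F0 D : has_deriv0 F F0 D ->
  exists2 d, 0 < d & forall t, `|t| < d -> cmod (F t - F0) <= `|t| * (cmod D + 1).
Proof.
move=> /(_ 1 ltr01) [d d0 hd]; exists d => // t /hd ht.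
have -> : F t - F0 = (F t - F0 - cR t * D) + cR t * D by ring.
apply: le_trans (cmodD _ _) _; rewrite cmodM cmod_cR; lra.
Qed.

Lemma has_deriv0_mul F G F0 G0 D E : has_deriv0 F F0 D -> has_deriv0 G G0 E ->
  has_deriv0 (fun t => F t * G t) (F0 * G0) (D * G0 + F0 * E).
Proof.
move=> hF hG eps e0.
set MG := cmod G0 + cmod E + 1.
set K := MG + cmod F0.
set L := cmod D * (cmod E + 1) + 1.
have K0 : 0 < K by rewrite /K /MG; have := cmod_ge0 G0; have := cmod_ge0 E; have := cmod_ge0 F0; lra.
have L0 : 0 < L by rewrite /L ltr_pwDr // mulr_ge0 ?cmod_ge0 // addr_ge0 ?cmod_ge0.
have eK : 0 < eps / 2 / K by rewrite !divr_gt0.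
have eL : 0 < eps / 2 / L by rewrite !divr_gt0.
have [d1 d10 h1] := hF _ eK; have [d2 d20 h2] := hG _ eK.
have [d3 d30 h3] := has_deriv0_lipschitz hG.
exists (Num.min (Num.min d1 d2) (Num.min (Num.min d3 1) (eps / 2 / L))).
  by rewrite !lt_min d10 d20 d30 ltr01 eL.
move=> t; rewrite !lt_min => /andP[/andP[/h1 t1 /h2 t2] /andP[/andP[/h3 t3 t4] t5]].
set rF := F t - F0 - cR t * D in t1; set rG := G t - G0 - cR t * E in t2.
have -> : F t * G t - F0 * G0 - cR t * (D * G0 + F0 * E) =
  rF * G t + F0 * rG + cR t * D * (G t - G0) by rewrite /rF /rG; ring.
have hGt : cmod (G t) <= MG.
  have -> : G t = G0 + (G t - G0) by ring.
  apply: le_trans (cmodD _ _) _; rewrite /MG.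
  have := normr_ge0 t; have := cmod_ge0 E; nra.
have hK : eps / 2 / K * `|t| * MG + cmod F0 * (eps / 2 / K * `|t|) = eps / 2 * `|t|.
  by move: K0; rewrite /K => K0; field; rewrite lt0r_neq0.
have hL : `|t| * L <= eps / 2 by rewrite -ler_pdivlMr // ltW.
apply: le_trans (cmodD _ _) _; apply: le_trans (lerD (cmodD _ _) (lexx _)) _.
rewrite !cmodM cmod_cR.
have hrFG : cmod rF * cmod (G t) <= eps / 2 / K * `|t| * MG by rewrite ler_pM ?cmod_ge0.
have hF0rG : cmod F0 * cmod rG <= cmod F0 * (eps / 2 / K * `|t|) by rewrite ler_pM ?cmod_ge0.
have hDG : `|t| * cmod D * cmod (G t - G0) <= `|t| * cmod D * (`|t| * (cmod E + 1)).
  by rewrite ler_pM ?cmod_ge0 ?mulr_ge0 ?cmod_ge0.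
have htL : `|t| * (`|t| * L) <= `|t| * (eps / 2) by apply: ler_wpM2l.
rewrite /L in htL; have := mulr_ge0 (normr_ge0 t) (normr_ge0 t); lra.
Qed.

Lemma has_deriv0_scale c F F0 D : has_deriv0 F F0 D ->
  has_deriv0 (fun t => c * F t) (c * F0) (c * D).
Proof.
move=> /(has_deriv0_mul (has_deriv0_cst c)).
by apply: eq_has_deriv0; rewrite // mul0r add0r.
Qed.

Lemma has_deriv0_sum (I : Type) (r : seq I) (F : I -> R -> C) F0 D :
  (forall i, has_deriv0 (F i) (F0 i) (D i)) ->
  has_deriv0 (fun t => \sum_(i <- r) F i t) (\sum_(i <- r) F0 i) (\sum_(i <- r) D i).
Proof.
move=> hF; elim: r => [|x r IH].
  by apply: eq_has_deriv0 (has_deriv0_cst 0) => [t||]; rewrite big_nil.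
by apply: eq_has_deriv0 (has_deriv0_add (hF x) IH) => [t||]; rewrite big_cons.
Qed.

Lemma has_deriv0_horner (p : {poly C}) : has_deriv0 (fun t => p.[cR t]) p.[0] (p^`()).[0].
Proof.
elim/poly_ind: p => [|q c IH].
  by apply: eq_has_deriv0 (has_deriv0_cst 0) => [t||]; rewrite ?deriv0 horner0.
have := has_deriv0_add (has_deriv0_mul IH has_deriv0_id) (has_deriv0_cst c).
by apply: eq_has_deriv0 => [t||]; rewrite ?derivMXaddC !hornerE //; ring.
Qed.

Lemma has_deriv0_eq0 F F0 D : has_deriv0 F F0 D ->
  (exists2 r : R, 0 < r & forall t, `|t| < r -> F t = 0) -> D = 0.
Proof.
move=> hF [r r0 hr].
have F00 : F0 = 0.
  apply: cmod_le0 => eps e0; have [d d0 /(_ 0)] := hF eps e0.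
  rewrite normr0 hr ?normr0 // mulr0 mul0r !subr0 sub0r cmodN => /(_ d0).
  by move=> /le_trans; apply; apply: ltW.
apply: cmod_le0 => eps e0; have [d d0 hd] := hF eps e0.
set t := Num.min d r / 2.
have t0 : 0 < t by rewrite divr_gt0 // lt_min d0 r0.
have : t < Num.min d r by rewrite /t ltr_pdivrMr // ltr_pMr ?ltr1n // lt_min d0 r0.
rewrite lt_min => /andP[td tr].
move: (hd t); rewrite gtr0_norm // => /(_ td).
rewrite hr ?gtr0_norm // F00 subr0 sub0r cmodN cmodM cmod_cR gtr0_norm //.
by rewrite mulrC ler_pM2r.
Qed.

End Deriv0.

Section ExpDeriv.
Local Open Scope classical_set_scope.
Variable R : realType.
Local Notation C := R[i].

Lemma is_derive0_approx (f : R -> R) (d : R) : is_derive (0 : R) (1 : R) f d ->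
  forall eps, 0 < eps -> exists2 del, 0 < del &
  forall t, `|t| < del -> `|f t - f 0 - t * d| <= eps * `|t|.
Proof.
move=> [df dv] eps e0.
have : (fun h : R => h^-1 *: ((f \o shift 0) (h *: 1) - f 0)) @ 0^' --> d.
  by rewrite -dv; apply: df.
move=> /cvgrPdist_le /(_ eps e0) /nbhs_ballP [e e0' he].
exists e => // t ht.
have [->|t0] := eqVneq t 0; first by rewrite !(subrr, mul0r, normr0, mulr0).
have := he t; rewrite /ball /= sub0r normrN => /(_ ht t0).
rewrite /= scaler1 addr0 => hle.
have -> : f t - f 0 - t * d = - (t * (d - t^-1 *: (f t - f 0))).
  by rewrite /GRing.scale /= mulrBr mulrA divff // mul1r opprB.
by rewrite normrN normrM mulrC ler_wpM2r.
Qed.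

Lemma is_derive_mull (a x : R) : is_derive x 1 ( *%R a) a.
Proof.
have := is_deriveZ a (is_derive_id x (1 : R)).
by rewrite /GRing.scale /= mulr1.
Qed.

Lemma has_deriv0_Complex (f g : R -> R) (df dg : R) :
  is_derive (0 : R) (1 : R) f df -> is_derive (0 : R) (1 : R) g dg ->
  has_deriv0 (fun t => Complex (f t) (g t)) (Complex (f 0) (g 0)) (Complex df dg).
Proof.
move=> hf hg eps e0.
have e2 : 0 < eps / 2 by rewrite divr_gt0.
have [d1 d10 h1] := is_derive0_approx hf e2.
have [d2 d20 h2] := is_derive0_approx hg e2.
exists (Num.min d1 d2) => [|t]; first by rewrite lt_min d10.
rewrite lt_min => /andP[/h1 t1 /h2 t2].
apply: le_trans (cmod_le_re_im _) _.
rewrite /= !mul0r !subr0 !addr0; lra.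
Qed.

Lemma cexpD (u v : C) : cexp (u + v) = cexp u * cexp v.
Proof.
rewrite /cexp reD imD expRD cosD sinD.
case: u => a b; case: v => c d /=.
by apply/eqP; rewrite eq_complex /=; apply/andP; split; apply/eqP; ring.
Qed.

Lemma eeD (x y : C) : ee (x + y) = ee x * ee y.
Proof. by rewrite /ee mulrDr cexpD. Qed.

Lemma ee_cR (s : R) : ee (cR s) = Complex (cos (2 * pi * s)) (sin (2 * pi * s)).
Proof.
rewrite /ee; have -> : cR (2 * pi) * ci R * cR s = ci R * cR (2 * pi * s) by rewrite !cRM; ring.
by rewrite /cexp re_cicR im_cicR expR0 !mul1r.
Qed.

Lemma ee_cicR (s : R) : ee (ci R * cR s) = Complex (expR (- (2 * pi * s))) 0.
Proof.
rewrite /ee; have -> : cR (2 * pi) * ci R * (ci R * cR s) = cR (- (2 * pi * s)).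
  by rewrite cRN !cRM -mulrA [ci R * _]mulrA ci2; ring.
by rewrite /cexp re_cR im_cR cos0 sin0 mulr1 mulr0.
Qed.

Lemma has_deriv0_ee_real (r : R) :
  has_deriv0 (fun t => ee (cR (t * r))) 1 (ci R * cR (2 * pi * r)).
Proof.
set a := 2 * pi * r.
have dcos : is_derive (0 : R) 1 (cos \o *%R a) (- sin (a * 0) * a).
  by apply: is_derive1_comp; apply: is_derive_mull.
have dsin : is_derive (0 : R) 1 (sin \o *%R a) (cos (a * 0) * a).
  by apply: is_derive1_comp; apply: is_derive_mull.
have := has_deriv0_Complex dcos dsin.
apply: eq_has_deriv0 => [t /=||].
- by rewrite ee_cR /a /= [t * r]mulrC mulrA.
- by rewrite /= mulr0 cos0 sin0.
- apply/eqP; rewrite eq_complex /= mulr0 sin0 cos0.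
  by apply/andP; split; apply/eqP; ring.
Qed.

Lemma has_deriv0_ee_imag (r : R) :
  has_deriv0 (fun t => ee (ci R * cR (t * r))) 1 (ci R * (ci R * cR (2 * pi * r))).
Proof.
set a := 2 * pi * r.
have dexp : is_derive (0 : R) 1 (expR \o *%R (- a)) (expR (- a * 0) * - a).
  by apply: is_derive1_comp; apply: is_derive_mull.
have := has_deriv0_Complex dexp (is_derive_cst (0 : R) (0 : R) 1).
apply: eq_has_deriv0 => [t /=||].
- by rewrite ee_cicR /a /= [t * r]mulrC mulrA mulNr.
- by rewrite /= mulr0 expR0.
- by rewrite mulrA ci2 mulN1r -cRN /= mulr0 expR0 mul1r.
Qed.

End ExpDeriv.

Section CauchyRiemann.
Variable R : realType.
Local Notation C := R[i].
Variable n : nat.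
Local Notation vec := ('I_n -> C).

Definition line_z (s : C) (z : vec) (v : 'I_n -> R) (t : R) : vec :=
  fun a => z a + s * cR (t * v a).
Definition line_tau (s : C) (tau : C) (k : R) (t : R) : C := tau + s * cR (t * k).

Definition on_line (f : vec -> C -> C) s z tau v k (t : R) : C :=
  f (line_z s z v t) (line_tau s tau k t).

Definition cauchy_riemann_at (f : vec -> C -> C) z tau v k := exists D : C,
  has_deriv0 (on_line f 1 z tau v k) (f z tau) D /\
  has_deriv0 (on_line f (ci R) z tau v k) (f z tau) (ci R * D).

Definition cauchy_riemann (f : vec -> C -> C) :=
  forall z tau, 0 < im tau -> forall v k, cauchy_riemann_at f z tau v k.

Lemma line_z0 s (z : vec) v : line_z s z v 0 = z.
Proof. by apply: funext => a; rewrite /line_z mul0r mulr0 addr0. Qed.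
Lemma line_tau0 s (tau : C) k : line_tau s tau k 0 = tau.
Proof. by rewrite /line_tau mul0r mulr0 addr0. Qed.
Lemma im_line_z1 z v t a : im (line_z 1 z v t a) = im (z a).
Proof. by rewrite /line_z mul1r imD im_cR addr0. Qed.
Lemma im_line_tau1 tau k t : im (line_tau 1 tau k t) = im tau.
Proof. by rewrite /line_tau mul1r imD im_cR addr0. Qed.
Lemma im_line_zi z v t a : im (line_z (ci R) z v t a) = im (z a) + t * v a.
Proof. by rewrite /line_z imD im_cicR. Qed.
Lemma im_line_taui tau k t : im (line_tau (ci R) tau k t) = im tau + t * k.
Proof. by rewrite /line_tau imD im_cicR. Qed.

Lemma eq_cauchy_riemann f g : (forall z tau, f z tau = g z tau) ->
  cauchy_riemann f -> cauchy_riemann g.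
Proof. by move=> fg; congr cauchy_riemann; apply/funext => z; apply/funext. Qed.

Lemma cauchy_riemann_cst c : cauchy_riemann (fun _ _ => c).
Proof.
move=> z tau _ v k; exists 0; split; first exact: has_deriv0_cst.
by rewrite mulr0; apply: has_deriv0_cst.
Qed.

Lemma cauchy_riemann_add f g : cauchy_riemann f -> cauchy_riemann g ->
  cauchy_riemann (fun z tau => f z tau + g z tau).
Proof.
move=> hf hg z tau ht v k.
have [Df [hf1 hfi]] := hf z tau ht v k; have [Dg [hg1 hgi]] := hg z tau ht v k.
exists (Df + Dg); split; first exact: has_deriv0_add.
by rewrite mulrDr; apply: has_deriv0_add.
Qed.

Lemma cauchy_riemann_mul f g : cauchy_riemann f -> cauchy_riemann g ->
  cauchy_riemann (fun z tau => f z tau * g z tau).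
Proof.
move=> hf hg z tau ht v k.
have [Df [hf1 hfi]] := hf z tau ht v k; have [Dg [hg1 hgi]] := hg z tau ht v k.
exists (Df * g z tau + f z tau * Dg); split; first exact: has_deriv0_mul.
by apply: eq_has_deriv0 (has_deriv0_mul hfi hgi) => //; ring.
Qed.

Lemma cauchy_riemann_scale c f : cauchy_riemann f ->
  cauchy_riemann (fun z tau => c * f z tau).
Proof. exact/cauchy_riemann_mul/cauchy_riemann_cst. Qed.

Lemma cauchy_riemann_sub f g : cauchy_riemann f -> cauchy_riemann g ->
  cauchy_riemann (fun z tau => f z tau - g z tau).
Proof.
move=> hf /(cauchy_riemann_scale (-1)) /(cauchy_riemann_add hf).
by apply: eq_cauchy_riemann => z tau; rewrite mulN1r.
Qed.

Lemma cauchy_riemann_sum (I : Type) (r : seq I) (F : I -> vec -> C -> C) :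
  (forall i, cauchy_riemann (F i)) ->
  cauchy_riemann (fun z tau => \sum_(i <- r) F i z tau).
Proof.
move=> hF; elim: r => [|x r IH].
  by apply: eq_cauchy_riemann (cauchy_riemann_cst 0) => z tau; rewrite big_nil.
apply: eq_cauchy_riemann (cauchy_riemann_add (hF x) IH) => z tau.
by rewrite big_cons.
Qed.

Lemma im_line_tau_gt0 s tau k t : cmod s = 1 -> `|t * k| < im tau ->
  0 < im (line_tau s tau k t).
Proof.
move=> s1 htk; rewrite /line_tau imD mulrC im_cRM.
have := abs_im_le_cmod s; rewrite s1 => hs.
have : `|t * k * im s| < im tau.
  by rewrite normrM; apply: le_lt_trans htk; rewrite ler_piMr.
have := ler_norm (- (t * k * im s)); rewrite normrN; lra.
Qed.

Definition has_complex_deriv (f : vec -> C -> C) z tau (dz : vec) (dtau : C) :=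
  forall eps : R, 0 < eps -> exists2 delta : R, 0 < delta &
  forall (h : vec) (k : C), (forall a, cmod (h a) < delta) -> cmod k < delta ->
    0 < im (tau + k) ->
    cmod (f (fun a => z a + h a) (tau + k) - f z tau
          - \sum_(a < n) dz a * h a - dtau * k)
    <= eps * (\sum_(a < n) cmod (h a) + cmod k).

Lemma has_complex_deriv_line f z tau dz dtau v k s :
  has_complex_deriv f z tau dz dtau -> 0 < im tau -> cmod s = 1 ->
  has_deriv0 (on_line f s z tau v k) (f z tau)
             (s * (\sum_a dz a * cR (v a) + dtau * cR k)).
Proof.
move=> hol ht s1 eps e0.
set V := \sum_a `|v a| + `|k|.
have V0 : 0 < V + 1 by rewrite ltr_pwDr // addr_ge0 ?sumr_ge0.
have [dl dl0 hd] := hol (eps / (V + 1)) (divr_gt0 e0 V0).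
exists (Num.min (dl / (V + 1)) (im tau / (V + 1))); first by rewrite lt_min !divr_gt0.
move=> t; rewrite lt_min !ltr_pdivlMr // => /andP[t1 t2].
have tV : `|t| * V <= `|t| * (V + 1) by rewrite ler_wpM2l // lerDl.
have vV a : `|v a| <= V.
  by rewrite /V (bigD1 a) //= -addrA lerDl addr_ge0 // sumr_ge0.
have kV : `|k| <= V by rewrite /V lerDr sumr_ge0.
have cmod_s x : cmod (s * cR (t * x)) = `|t| * `|x|.
  by rewrite cmodM s1 mul1r cmod_cR normrM.
have hh a : cmod (s * cR (t * v a)) < dl.
  by rewrite cmod_s; apply: le_lt_trans t1; apply: le_trans tV; rewrite ler_wpM2l.
have hk : cmod (s * cR (t * k)) < dl.
  by rewrite cmod_s; apply: le_lt_trans t1; apply: le_trans tV; rewrite ler_wpM2l.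
have him : 0 < im (line_tau s tau k t).
  apply: im_line_tau_gt0 => //; apply: le_lt_trans t2.
  by rewrite normrM; apply: le_trans tV; rewrite ler_wpM2l.
have lin : \sum_a dz a * (s * cR (t * v a)) + dtau * (s * cR (t * k)) =
    cR t * (s * (\sum_a dz a * cR (v a) + dtau * cR k)).
  rewrite !mulrDr !mulr_sumr cRM; congr (_ + _); last by ring.
  by apply: eq_bigr => a _; rewrite cRM; ring.
have := hd _ _ hh hk him; rewrite -addrA -opprD lin => /le_trans; apply.
have -> : \sum_a cmod (s * cR (t * v a)) + cmod (s * cR (t * k)) = `|t| * V.
  by rewrite /V mulrDr mulr_sumr cmod_s; congr (_ + _); apply: eq_bigr => a _.
have -> : eps / (V + 1) * (`|t| * V) = eps * `|t| * (V / (V + 1)) by ring.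
rewrite -[leRHS]mulr1; apply: ler_wpM2l; first by rewrite mulr_ge0 // ltW.
by rewrite ler_pdivrMr // mul1r lerDl.
Qed.

Lemma holomorphic_cauchy_riemann f : holomorphic f -> cauchy_riemann f.
Proof.
move=> hol z tau ht v k; have [dz [dtau hd]] := hol z tau ht.
exists (\sum_a dz a * cR (v a) + dtau * cR k); split.
  by rewrite -[X in has_deriv0 _ _ X]mul1r; apply: has_complex_deriv_line; rewrite ?cmod1.
by apply: has_complex_deriv_line; rewrite ?cmod_ci.
Qed.

(* Along the real line the derivative of the relation is [\sum_i D_i p_i(0)]; along the
   imaginary line the Cauchy-Riemann equations turn it into
   [i \sum_i D_i p_i(0) + \sum_i H_i p_i'(0)]. Both vanish. *)
Lemma cauchy_riemann_poly_relation (I : finType) (H : I -> vec -> C -> C)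
    (p : I -> {poly C}) z tau v k :
  (forall i, cauchy_riemann_at (H i) z tau v k) ->
  (exists2 r : R, 0 < r & forall t, `|t| < r ->
     \sum_i on_line (H i) 1 z tau v k t * (p i).[0] = 0 /\
     \sum_i on_line (H i) (ci R) z tau v k t * (p i).[cR t] = 0) ->
  \sum_i H i z tau * ((p i)^`()).[0] = 0.
Proof.
move=> /choice [D hD] [r r0 hr].
have d1 := has_deriv0_sum (index_enum I)
  (fun i => has_deriv0_mul (hD i).1 (has_deriv0_cst (p i).[0])).
have d2 := has_deriv0_sum (index_enum I)
  (fun i => has_deriv0_mul (hD i).2 (has_deriv0_horner (p i))).
have /= e1 := has_deriv0_eq0 d1 (ex_intro2 _ _ r r0 (fun t ht => (hr t ht).1)).
have /= e2 := has_deriv0_eq0 d2 (ex_intro2 _ _ r r0 (fun t ht => (hr t ht).2)).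
transitivity (\sum_i (ci R * D i * (p i).[0] + H i z tau * ((p i)^`()).[0])
              - ci R * \sum_i (D i * (p i).[0] + H i z tau * 0)).
  by rewrite mulr_sumr -sumrB; apply: eq_bigr => i _; ring.
by rewrite e1 e2 mulr0 subr0.
Qed.

Lemma cauchy_riemann_ee_affine (A : vec -> C -> C) :
  (forall z tau v k, exists r : R, forall s t,
     on_line A s z tau v k t = A z tau + s * cR (t * r)) ->
  cauchy_riemann (fun z tau => ee (A z tau)).
Proof.
move=> hA z tau _ v k; have [r hr] := hA z tau v k.
exists (ee (A z tau) * (ci R * cR (2 * pi * r))); split.
  apply: eq_has_deriv0 (has_deriv0_scale (ee (A z tau)) (has_deriv0_ee_real r)) => [t||].
  - by rewrite /on_line -/(on_line A _ _ _ _ _ t) hr eeD mul1r.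
  - by rewrite mulr1.
  - by [].
apply: eq_has_deriv0 (has_deriv0_scale (ee (A z tau)) (has_deriv0_ee_imag r)) => [t||].
- by rewrite /on_line -/(on_line A _ _ _ _ _ t) hr eeD.
- by rewrite mulr1.
- by ring.
Qed.

Variables lam mu : 'I_n -> int.

Definition shift_z (w : vec) (tau : C) : vec :=
  fun a => w a - (lam a)%:~R * tau - (mu a)%:~R.

Lemma shift_z_line s w tau v k t :
  shift_z (line_z s w v t) (line_tau s tau k t) =
  line_z s (shift_z w tau) (fun a => v a - (lam a)%:~R * k) t.
Proof.
apply: funext => a; rewrite /shift_z /line_z /line_tau -cR_int.
by rewrite !(cRM, cRB); ring.
Qed.

Lemma cauchy_riemann_shift f : cauchy_riemann f ->
  cauchy_riemann (fun w tau => f (shift_z w tau) tau).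
Proof.
move=> hf w tau ht v k.
have [D [h1 hi]] := hf (shift_z w tau) tau ht (fun a => v a - (lam a)%:~R * k) k.
exists D; split; [apply: eq_has_deriv0 h1 | apply: eq_has_deriv0 hi] => // t;
  by rewrite /on_line shift_z_line.
Qed.

End CauchyRiemann.

Section NullCombination.
Variable R : realType.
Local Notation C := R[i].
Variable n : nat.
Local Notation vec := ('I_n -> C).
Variable B : nat.
Local Notation idx := {ffun 'I_n -> 'I_B.+1}.
Local Notation family := ('I_B.+1 -> idx -> vec -> C -> C).

(* [nu^i alpha^j] times [(8 pi Im tau)^B], which clears the denominator of [nu]. *)
Definition monomial (i : 'I_B.+1) (j : idx) (z : vec) (tau : C) : C :=
  cR (8 * pi * im tau) ^+ (B - i) * \prod_a alpha z tau a ^+ (j a).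

Definition null_combination (H : family) :=
  forall z tau, 0 < im tau -> \sum_i \sum_j H i j z tau * monomial i j z tau = 0.

Lemma monomial_line1 i j z tau v k t :
  monomial i j (line_z 1 z v t) (line_tau 1 tau k t) = monomial i j z tau.
Proof.
rewrite /monomial im_line_tau1; congr (_ * _); apply: eq_bigr => a _.
by rewrite /alpha im_line_z1 im_line_tau1.
Qed.

Lemma eq_null_combination (H G : family) :
  (forall i j z tau, H i j z tau = G i j z tau) ->
  null_combination H -> null_combination G.
Proof.
move=> HG hH z tau ht; rewrite -[RHS](hH z tau ht).
by apply: eq_bigr => i _; apply: eq_bigr => j _; rewrite HG.
Qed.

Lemma null_combination_deriv (H : family) (P : 'I_B.+1 -> idx -> {poly C}) z tau v k r :
  (forall i j, cauchy_riemann (H i j)) -> null_combination H -> 0 < im tau -> 0 < r ->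
  (forall t, `|t| < r -> 0 < im (line_tau (ci R) tau k t) /\
     forall i j, (P i j).[cR t] = monomial i j (line_z (ci R) z v t) (line_tau (ci R) tau k t)) ->
  \sum_i \sum_j H i j z tau * ((P i j)^`()).[0] = 0.
Proof.
move=> hH h0 ht r0 hP.
have P0 i j : (P i j).[0] = monomial i j z tau.
  by have := hP 0; rewrite normr0 line_z0 line_tau0 => /(_ r0) [_ /(_ i j)].
rewrite pair_bigA /=.
apply: (cauchy_riemann_poly_relation (fun p => hH p.1 p.2 z tau ht v k)).
exists r => // t /hP [hti hPt]; split.
  rewrite -(pair_bigA _ (fun i j => on_line (H i j) 1 z tau v k t * (P i j).[0])) /=.
  rewrite -[RHS](h0 (line_z 1 z v t) (line_tau 1 tau k t)); last by rewrite im_line_tau1.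
  by apply: eq_bigr => i _; apply: eq_bigr => j _; rewrite P0 monomial_line1.
rewrite -(pair_bigA _ (fun i j => on_line (H i j) (ci R) z tau v k t * (P i j).[cR t])) /=.
rewrite -[RHS](h0 (line_z (ci R) z v t) _ hti).
by apply: eq_bigr => i _; apply: eq_bigr => j _; rewrite hPt.
Qed.

Lemma null_combination_nu_degree (H : family) :
  (forall i j, cauchy_riemann (H i j)) -> null_combination H ->
  null_combination (fun i j z tau => (B - i)%:R * H i j z tau).
Proof.
move=> hH h0 z tau ht.
(* Along [(z + i t Im z / Im tau, tau + i t)] every [alpha] is constant while
   [8 pi Im tau] grows linearly in [t]. *)
set c := cR (8 * pi * im tau).
pose P (i : 'I_B.+1) (j : idx) :=
  (c%:P + cR (8 * pi) *: 'X) ^+ (B - i) * (\prod_a alpha z tau a ^+ j a)%:P.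
have hP : forall t, `|t| < im tau -> 0 < im (line_tau (ci R) tau 1 t) /\
     forall i j, (P i j).[cR t] =
       monomial i j (line_z (ci R) z (fun a => im (z a) / im tau) t) (line_tau (ci R) tau 1 t).
  move=> t htr; have ht' : 0 < im tau + t.
    by have := ler_norm (- t); rewrite normrN; lra.
  rewrite im_line_taui mulr1; split => // i j.
  rewrite /P /monomial !hornerE im_line_taui mulr1 /c -cRM -cRD.
  congr (cR _ ^+ _ * _); first by ring.
  apply: eq_bigr => a _; rewrite /alpha im_line_zi im_line_taui mulr1; congr (cR _ ^+ _).
  by field; rewrite !gt_eqF.
have hd := null_combination_deriv hH h0 ht ht hP.
rewrite -[RHS](mulr0 (cR (im tau))) -[in RHS]hd mulr_sumr.
apply: eq_bigr => i _; rewrite mulr_sumr; apply: eq_bigr => j _.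
rewrite /P /monomial derivM derivC mulr0 addr0 deriv_exp derivD derivC derivZ derivX add0r.
rewrite !(hornerM, hornerC, horner_exp, hornerD, hornerZ, hornerX, hornerMn) mulr0 addr0.
case: (B - i)%N => [|m]; first by rewrite !mulr0n !mul0r !mulr0.
rewrite [m.+1.-1]/= exprSr /c cRM -mulr_natr.
set X := cR (8 * pi * im tau) ^+ m; set Pi := \prod_a _; ring.
Qed.

Lemma null_combination_alpha_degree (l : 'I_n) (H : family) :
  (forall i j, cauchy_riemann (H i j)) -> null_combination H ->
  null_combination (fun i j z tau => (j l)%:R * H i j z tau).
Proof.
move=> hH h0 z tau ht.
(* Along [z_l + i t Im z_l] only [alpha_l] moves, by the factor [1 + t]. *)
pose v a := if a == l then im (z l) else 0.
pose P (i : 'I_B.+1) (j : idx) := (monomial i j z tau)%:P * (1 + 'X) ^+ (j l).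
have hP : forall t, `|t| < 1 -> 0 < im (line_tau (ci R) tau 0 t) /\
    forall i j, (P i j).[cR t] = monomial i j (line_z (ci R) z v t) (line_tau (ci R) tau 0 t).
  move=> t _; rewrite im_line_taui mulr0 addr0; split => // i j.
  rewrite /P /monomial !(hornerM, hornerC, horner_exp, hornerD, hornerX).
  rewrite im_line_taui mulr0 addr0 -[_ * _ * (1 + cR t) ^+ _]mulrA; congr (_ * _).
  rewrite (bigD1 l) //= [in RHS](bigD1 l) //= mulrAC; congr (_ * _).
    rewrite /alpha im_line_zi im_line_taui mulr0 addr0 /v eqxx -exprMn.
    by congr (_ ^+ _); rewrite -cR1 -cRD -cRM; congr cR; field; rewrite gt_eqF.
  apply: eq_bigr => a hal.
  by rewrite /alpha im_line_zi im_line_taui /v (negbTE hal) !mulr0 !addr0.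
rewrite -[RHS](null_combination_deriv hH h0 ht ltr01 hP).
apply: eq_bigr => i _; apply: eq_bigr => j _.
rewrite /P derivM derivC mul0r add0r deriv_exp derivD derivC derivX add0r.
rewrite !(hornerM, hornerC, horner_exp, hornerD, hornerX, hornerMn) addr0 expr1n.
by rewrite -mulr_natr; ring.
Qed.

Definition preserves_null (w : 'I_B.+1 -> idx -> C) := forall H : family,
  (forall i j, cauchy_riemann (H i j)) -> null_combination H ->
  null_combination (fun i j z tau => w i j * H i j z tau).

Lemma preserves_null_mul w1 w2 : preserves_null w1 -> preserves_null w2 ->
  preserves_null (fun i j => w1 i j * w2 i j).
Proof.
move=> h1 h2 H hH h0.
have hH2 i j : cauchy_riemann (fun z tau => w2 i j * H i j z tau).
  exact: cauchy_riemann_scale.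
by apply: eq_null_combination (h1 _ hH2 (h2 _ hH h0)) => i j z tau; rewrite mulrA.
Qed.

Lemma preserves_null_subr w c : preserves_null w ->
  preserves_null (fun i j => w i j - c).
Proof.
move=> hw H hH h0 z tau ht.
have -> : \sum_i \sum_j (w i j - c) * H i j z tau * monomial i j z tau =
    \sum_i \sum_j w i j * H i j z tau * monomial i j z tau
    - c * \sum_i \sum_j H i j z tau * monomial i j z tau.
  rewrite mulr_sumr -sumrB; apply: eq_bigr => i _.
  by rewrite mulr_sumr -sumrB; apply: eq_bigr => j _; ring.
by rewrite hw // h0 // mulr0 subr0.
Qed.

Lemma preserves_null_prod (I : Type) (r : seq I) (w : I -> 'I_B.+1 -> idx -> C) :
  (forall x, preserves_null (w x)) ->
  preserves_null (fun i j => \prod_(x <- r) w x i j).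
Proof.
move=> hw; elim: r => [|x r IH] H hH h0.
  by apply: eq_null_combination h0 => i j z tau; rewrite big_nil mul1r.
apply: eq_null_combination (preserves_null_mul (hw x) IH hH h0) => i j z tau.
by rewrite big_cons.
Qed.

(* Vanishes at every [(i, j)] but [(0, 0)], since [0 <= B - i <= B] and [0 <= j l <= B]. *)
Definition coef0_filter (i : 'I_B.+1) (j : idx) : C :=
  (\prod_(c <- iota 0 B) ((B - i)%:R - c%:R)) *
  \prod_(l <- enum 'I_n) \prod_(c <- iota 1 B) ((j l)%:R - c%:R).

Lemma preserves_null_coef0_filter : preserves_null coef0_filter.
Proof.
apply: preserves_null_mul.
  by apply: preserves_null_prod => c; exact/preserves_null_subr/null_combination_nu_degree.
apply: preserves_null_prod => l; apply: preserves_null_prod => c.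
exact/preserves_null_subr/(null_combination_alpha_degree l).
Qed.

Lemma coef0_filter_eq0 i j : (i, j) != (ord0, [ffun => ord0]) -> coef0_filter i j = 0.
Proof.
rewrite xpair_eqE negb_and => /orP[hi|hj]; apply/eqP; rewrite mulf_eq0.
  rewrite prodf_seq_eq0; apply/orP; left; apply/hasP; exists (B - i)%N.
    by rewrite mem_iota add0n; move: hi; rewrite -val_eqE /=; have := ltn_ord i; lia.
  by rewrite subrr eqxx.
have [l hl] : exists l, j l != ord0.
  apply/existsP; apply: contraR hj; rewrite negb_exists => /forallP hall.
  by apply/eqP/ffunP => a; rewrite ffunE; apply/eqP/negPn/hall.
rewrite !prodf_seq_eq0; apply/orP; right; apply/hasP; exists l; first by rewrite mem_enum.
rewrite prodf_seq_eq0; apply/hasP; exists (j l : nat); last by rewrite subrr eqxx.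
by rewrite mem_iota add1n ltn_ord andbT lt0n; move: hl; rewrite -val_eqE.
Qed.

Lemma coef0_filter00 : coef0_filter ord0 [ffun => ord0] != 0.
Proof.
rewrite mulf_eq0 negb_or !prodf_seq_neq0; apply/andP; split; apply/allP.
  by move=> c; rewrite mem_iota subn0 subr_eq0 eqr_nat => /andP[_ hc]; rewrite gtn_eqF.
move=> l _ /=; rewrite prodf_seq_neq0; apply/allP => c.
by rewrite mem_iota ffunE subr_eq0 eqr_nat => /andP[hc _]; rewrite ltn_eqF.
Qed.

Lemma null_combination_coef0 (H : family) :
  (forall i j, cauchy_riemann (H i j)) -> null_combination H ->
  forall z tau, 0 < im tau -> H ord0 [ffun => ord0] z tau = 0.
Proof.
move=> hH h0 z tau ht.
have := preserves_null_coef0_filter hH h0 z ht.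
rewrite pair_bigA (bigD1 (ord0, [ffun => ord0])) //= big1 ?addr0; last first.
  by move=> [i j] /coef0_filter_eq0 ->; rewrite !mul0r.
have m00 : monomial ord0 [ffun => ord0] z tau != 0.
  rewrite /monomial subn0 big1 => [|a _]; last by rewrite ffunE expr0.
  by rewrite mulr1 expf_neq0 // cR_8pi_neq0.
move/eqP; rewrite mulf_eq0 (negbTE m00) orbF mulf_eq0 (negbTE coef0_filter00).
by move/eqP.
Qed.

End NullCombination.

Section Automorphy.
Variable R : realType.
Local Notation C := R[i].
Variable n : nat.
Local Notation vec := ('I_n -> C).
Variable L : 'M[rat]_n.
Variables lam mu : 'I_n -> int.

Definition automorphy_exponent (z : vec) (tau : C) : C :=
  - (Lq L (ivec lam) (ivec lam) * tau) - 2 * Lq L (ivec lam) z.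

Definition Lq_lam_real (y : 'I_n -> R) : R :=
  \sum_a \sum_b (lam a)%:~R * ratr (L a b) * y b.

Lemma Lq_lam_line (x : vec) s t (v : 'I_n -> R) :
  Lq L (ivec lam) (fun b => x b + s * cR (t * v b)) =
  Lq L (ivec lam) x + s * cR (t * Lq_lam_real v).
Proof.
have -> : s * cR (t * Lq_lam_real v) =
    \sum_a \sum_b ivec lam a * ratr (L a b) * (s * cR (t * v b)).
  rewrite /Lq_lam_real mulr_sumr cR_sum mulr_sumr; apply: eq_bigr => a _.
  rewrite mulr_sumr cR_sum mulr_sumr; apply: eq_bigr => b _.
  rewrite /ivec [cR (t * (_ * v b))]cRM [cR (_ * ratr _ * _)]cRM [cR (_ * ratr _)]cRM.
  rewrite [cR (t * v b)]cRM cR_int cR_rat.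
  by rewrite [cR t * _]mulrCA [LHS]mulrCA.
rewrite /Lq -big_split; apply: eq_bigr => a _; rewrite -big_split.
by apply: eq_bigr => b _; rewrite mulrDr.
Qed.

Lemma Lq_lam_lam : Lq L (ivec lam) (ivec lam) = cR (Lq_lam_real (fun b => (lam b)%:~R)).
Proof.
rewrite /Lq /Lq_lam_real cR_sum; apply: eq_bigr => a _; rewrite cR_sum.
by apply: eq_bigr => b _; rewrite /ivec [cR (_ * _%:~R)]cRM [cR (_ * ratr _)]cRM !cR_int cR_rat.
Qed.

Lemma cauchy_riemann_automorphy_factor :
  cauchy_riemann (fun w tau => ee (automorphy_exponent (shift_z lam mu w tau) tau)).
Proof.
apply: (cauchy_riemann_shift lam mu (f := fun z tau => ee (automorphy_exponent z tau))).
apply: cauchy_riemann_ee_affine => z tau v k.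
exists (- (Lq_lam_real (fun b => (lam b)%:~R) * k) - 2 * Lq_lam_real v) => s t.
rewrite /on_line /automorphy_exponent /line_z /line_tau Lq_lam_line Lq_lam_lam.
by rewrite !(cRM, cRB, cRN) cR_nat; ring.
Qed.

End Automorphy.

Section ShiftExpansion.
Variable C : comNzRingType.
Variables n B : nat.
Local Notation idx := {ffun 'I_n -> 'I_B.+1}.

Lemma exprDn_ord (x y : C) (m : nat) : (m <= B)%N ->
  (x + y) ^+ m = \sum_(k < B.+1) y ^+ (m - k) * x ^+ k *+ 'C(m, k).
Proof.
move=> hm; rewrite addrC exprDn.
rewrite (big_ord_widen B.+1 (fun k => y ^+ (m - k) * x ^+ k *+ 'C(m, k))) // big_mkcond.
apply: eq_bigr => k _; case: ifP => // /negbT; rewrite -leqNgt => hk.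
by rewrite bin_small // mulr0n.
Qed.

Lemma shift_expansion (c : idx -> C) (Y Lm : 'I_n -> C) :
  \sum_(j : idx) c j * \prod_a (Y a + Lm a) ^+ (j a) =
  \sum_(k : idx) (\sum_(j : idx) c j * \prod_a (Lm a ^+ (j a - k a) *+ 'C(j a, k a)))
     * \prod_a Y a ^+ (k a).
Proof.
transitivity (\sum_(j : idx) \sum_(k : idx) c j *
   ((\prod_a (Lm a ^+ (j a - k a) *+ 'C(j a, k a))) * \prod_a Y a ^+ (k a))).
  apply: eq_bigr => j _.
  rewrite (eq_bigr _ (fun a _ => exprDn_ord (Y a) (Lm a) (ltnSE (ltn_ord (j a))))).
  rewrite bigA_distr_bigA mulr_sumr; apply: eq_bigr => K _; rewrite -big_split /=.
  by congr (_ * _); apply: eq_bigr => a _; rewrite mulrnAl.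
rewrite exchange_big; apply: eq_bigr => k _; rewrite mulr_suml; apply: eq_bigr => j _.
by rewrite mulrA.
Qed.

End ShiftExpansion.

Section TranslationDefect.
Variable R : realType.
Local Notation C := R[i].
Variable n : nat.
Local Notation vec := ('I_n -> C).
Variable L : 'M[rat]_n.
Variables lam mu : 'I_n -> int.
Variable D : nat.
Local Notation idx := {ffun 'I_n -> 'I_D.+1}.
Variable phi : coef_family R n.

Local Notation factor w tau := (ee (automorphy_exponent L lam (shift_z lam mu w tau) tau)).

(* The coefficient of [nu^i alpha^k] in [Phi(w) - e(...) Phi(w - lam tau - mu)], once
   [alpha(w - lam tau - mu) = alpha(w) - lam] is expanded binomially. *)
Definition translation_defect (i : 'I_D.+1) (k : idx) (w : vec) (tau : C) : C :=
  phi i (mindex k) w tau - factor w tau *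
  \sum_(j : idx) phi i (mindex j) (shift_z lam mu w tau) tau *
     \prod_a ((- (lam a)%:~R) ^+ (j a - k a) *+ 'C(j a, k a)).

Lemma cauchy_riemann_translation_defect : (forall i j, holomorphic (phi i j)) ->
  forall i k, cauchy_riemann (translation_defect i k).
Proof.
move=> hol i k; apply: cauchy_riemann_sub; first exact: holomorphic_cauchy_riemann.
apply: cauchy_riemann_mul; first exact: cauchy_riemann_automorphy_factor.
apply: cauchy_riemann_sum => j; apply: cauchy_riemann_mul; last exact: cauchy_riemann_cst.
exact/cauchy_riemann_shift/holomorphic_cauchy_riemann.
Qed.

Lemma alpha_shift (w : vec) (tau : C) a : 0 < im tau ->
  alpha (shift_z lam mu w tau) tau a = alpha w tau a + - (lam a)%:~R.
Proof.
move=> ht; rewrite /alpha /shift_z !imB -!cR_int im_cRM im_cR subr0 -cRN -cRD.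
by congr cR; field; rewrite gt_eqF.
Qed.

Lemma null_combination_translation_defect :
  (forall z tau, 0 < im tau ->
     eval_ah D phi (fun l => z l + (lam l)%:~R * tau + (mu l)%:~R) tau
       = ee (automorphy_exponent L lam z tau) * eval_ah D phi z tau) ->
  null_combination translation_defect.
Proof.
move=> hell w tau ht.
have hE := hell (shift_z lam mu w tau) tau ht.
have shiftK : (fun l => shift_z lam mu w tau l + (lam l)%:~R * tau + (mu l)%:~R) = w.
  by apply: funext => l; rewrite /shift_z; ring.
rewrite shiftK in hE.
set c := cR (8 * pi * im tau).
have cX (i : 'I_D.+1) : c ^+ (D - i) = c ^+ D * nu tau ^+ i.
  rewrite /nu cRV exprVn exprB ?unitfE ?cR_8pi_neq0 //.
  by rewrite -ltnS ltn_ord.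
transitivity (c ^+ D * (eval_ah D phi w tau - factor w tau * eval_ah D phi (shift_z lam mu w tau) tau));
  last by rewrite -hE subrr mulr0.
rewrite mulrBr /eval_ah !mulr_sumr -sumrB; apply: eq_bigr => i _.
rewrite /translation_defect; under eq_bigr do rewrite mulrBl.
rewrite sumrB; congr (_ - _).
  rewrite mulr_sumr; apply: eq_bigr => k _; rewrite /monomial -/c cX /mindex.
  under [in RHS]eq_bigr do rewrite ffunE.
  set P := \prod_(a < n) _; set X := c ^+ D; set Y := nu tau ^+ i; ring.
transitivity (factor w tau * c ^+ D * nu tau ^+ i * \sum_(j : idx)
    phi i (mindex j) (shift_z lam mu w tau) tau * \prod_a (alpha w tau a + - (lam a)%:~R) ^+ (j a)).
  rewrite shift_expansion mulr_sumr; apply: eq_bigr => k _.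
  rewrite /monomial -/c cX; set S := \sum_(j : idx) _; set P := \prod_(a < n) _.
  set X := c ^+ D; set Y := nu tau ^+ i; set E := ee _; ring.
rewrite [in RHS]mulr_sumr [in RHS]mulr_sumr mulr_sumr; apply: eq_bigr => j _.
have -> : \prod_(a < n) alpha (shift_z lam mu w tau) tau a ^+ mindex j a =
    \prod_a (alpha w tau a + - (lam a)%:~R) ^+ (j a).
  by apply: eq_bigr => a _; rewrite alpha_shift // /mindex ffunE.
set P := \prod_(a < n) _; set X := c ^+ D; set Y := nu tau ^+ i; set E := ee _; ring.
Qed.

End TranslationDefect.

Lemma qj_part_translate (R : realType) (n : nat) (k : int) (L : 'M[rat]_n) (D : nat)
    (Phi : coef_family R n) (lam mu : 'I_n -> int) z tau :
  ah_weak_jacobi k L D Phi -> 0 < im tau ->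
  qj_part Phi (fun l => z l + (lam l)%:~R * tau + (mu l)%:~R) tau =
  ee (automorphy_exponent L lam z tau) *
  \sum_(j : {ffun 'I_n -> 'I_D.+1}) Phi 0%N (mindex j) z tau * \prod_a (- (lam a)%:~R) ^+ (j a).
Proof.
move=> [_ [hhol [_ hell]]] ht.
set w := fun l => _.
have shiftw : shift_z lam mu w tau = z by apply: funext => l; rewrite /shift_z /w; ring.
have := null_combination_coef0 (cauchy_riemann_translation_defect L lam mu (fun i j => (hhol i j).1))
  (null_combination_translation_defect (hell lam mu)) w ht.
rewrite /translation_defect shiftw (_ : mindex _ = mzero n); last by apply/ffunP => a; rewrite !ffunE.
move/subr0_eq; rewrite /qj_part -[0%N]/(nat_of_ord (@ord0 D)) => ->.
congr (_ * _).
apply: eq_bigr => j _; congr (_ * _); apply: eq_bigr => a _.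
by rewrite ffunE subn0 bin0 mulr1n.
Qed.

Section TaylorSum.
Variable R : realType.
Local Notation C := R[i].
Variables (n D : nat) (lam : 'I_n -> int).
Local Notation idx := {ffun 'I_n -> 'I_D.+1}.
Local Notation nidx := {ffun 'I_n -> nat}.

Definition dlam_coef (c : nidx -> C) (j : nidx) : C :=
  \sum_(l < n) (lam l)%:~R * (j l).+1%:R * c (Defs.bump j l).

Definition bounded_coef (c : nidx -> C) :=
  forall j : nidx, [exists a, (D < j a)%N] -> c j = 0.

Definition lam_pow (j : idx) : C := \prod_a (lam a)%:~R ^+ (j a).
Definition mdeg (j : idx) : nat := \sum_a (j a : nat).

(* The polynomial [t |-> \sum_j c_j (t lam)^j]; on it [dlam_coef] acts as [d/dt]. *)
Definition lam_poly (c : nidx -> C) : {poly C} :=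
  \sum_(j : idx) (c (mindex j) * lam_pow j) *: 'X^(mdeg j).

(* [ordS] wraps [D] around to [0], where the bumped coefficient vanishes anyway. *)
Definition bump_ord (l : 'I_n) (j : idx) : idx :=
  [ffun a => if a == l then ordS (j a) else j a].

Lemma bump_ord_inj l : injective (bump_ord l).
Proof.
move=> j1 j2 /ffunP h; apply/ffunP => a; have := h a; rewrite !ffunE.
by case: (a == l) => //; apply: ordS_inj.
Qed.

Lemma bounded_dlam_coef c : bounded_coef c -> bounded_coef (dlam_coef c).
Proof.
move=> hc j /existsP [a ha]; apply: big1 => l _.
rewrite hc ?mulr0 //; apply/existsP; exists a; rewrite /Defs.bump ffunE.
by case: (a == l) => //; apply: leq_trans ha _.
Qed.

Lemma lam_poly_dlam c : bounded_coef c -> lam_poly (dlam_coef c) = (lam_poly c)^`().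
Proof.
move=> hc; rewrite /lam_poly raddf_sum /=.
transitivity (\sum_(l < n) \sum_(j : idx)
   ((lam l)%:~R * (mindex j l).+1%:R * c (Defs.bump (mindex j) l) * lam_pow j) *: 'X^(mdeg j)).
  rewrite exchange_big; apply: eq_bigr => j _; rewrite /dlam_coef mulr_suml scaler_suml.
  by apply: eq_bigr => l _.
transitivity (\sum_(l < n) \sum_(j : idx)
   (((j l)%:R * c (mindex j) * lam_pow j) *: 'X^((mdeg j).-1))); last first.
  rewrite exchange_big; apply: eq_bigr => j _.
  rewrite derivZ derivXn -scaler_nat scalerA -scaler_suml; congr (_ *: _).
  by rewrite /mdeg natr_sum mulr_sumr; apply: eq_bigr => l _; ring.
apply: eq_bigr => l _.
rewrite [in RHS](reindex_inj (@bump_ord_inj l)) /=; apply: eq_bigr => j _.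
have e1 : bump_ord l j l = ordS (j l) by rewrite ffunE eqxx.
have [jl_lt|jl_ge] := ltnP (j l) D; last first.
  have jlD : (j l : nat) = D by apply/eqP; rewrite eqn_leq jl_ge -ltnS ltn_ord.
  rewrite e1 /ordS /= jlD modnn mul0r mul0r scale0r.
  rewrite hc ?mulr0 ?mul0r ?scale0r //; apply/existsP; exists l.
  by rewrite /Defs.bump !ffunE eqxx jlD.
have ordS_jl : (ordS (j l) : nat) = (j l).+1 by rewrite /ordS /= modn_small.
have e2 : mindex (bump_ord l j) = Defs.bump (mindex j) l.
  by apply/ffunP => a; rewrite !ffunE; case: eqP => [->|]; rewrite ?ordS_jl.
have e3 : lam_pow (bump_ord l j) = (lam l)%:~R * lam_pow j.
  rewrite /lam_pow (bigD1 l) //= [in RHS](bigD1 l) //= e1 ordS_jl exprS -!mulrA.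
  by congr (_ * (_ * _)); apply: eq_bigr => a hal; rewrite ffunE (negbTE hal).
have e4 : mdeg (bump_ord l j) = (mdeg j).+1.
  rewrite /mdeg (bigD1 l) //= [in RHS](bigD1 l) //= e1 ordS_jl addSn.
  by congr (_ + _).+1; apply: eq_bigr => a hal; rewrite ffunE (negbTE hal).
by rewrite e1 e2 e3 e4 ordS_jl /= /mindex ffunE; congr (_ *: _); ring.
Qed.

Lemma lam_poly_iter_dlam c k : bounded_coef c ->
  lam_poly (iter k dlam_coef c) = (lam_poly c)^`(k).
Proof.
move=> hc; elim: k => [|k IH]; first by rewrite derivn0.
have hk : bounded_coef (iter k dlam_coef c).
  by elim: (k) => [|m IHm] //=; apply: bounded_dlam_coef.
by rewrite [iter _ _ _]/= lam_poly_dlam // IH derivnS.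
Qed.

Lemma lam_poly_at0 c : (lam_poly c).[0] = c (mzero n).
Proof.
rewrite /lam_poly horner_sum (bigD1 [ffun => ord0]) //= big1 ?addr0; last first.
  move=> j hj; rewrite hornerZ hornerXn expr0n.
  case: eqP => [/eqP|]; last by rewrite mulr0.
  rewrite /mdeg sum_nat_eq0 => /forallP h; move: hj; case/eqP.
  by apply/ffunP => a; rewrite ffunE; apply/val_inj/eqP/h.
have -> : mdeg [ffun => ord0] = 0%N by rewrite /mdeg big1 // => a _; rewrite ffunE.
have -> : lam_pow [ffun => ord0] = 1 by rewrite /lam_pow big1 // => a _; rewrite ffunE expr0.
have -> : mindex ([ffun => ord0] : idx) = mzero n by apply/ffunP => a; rewrite !ffunE.
by rewrite hornerZ hornerXn expr0 !mulr1.
Qed.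

Lemma size_lam_poly c : (size (lam_poly c) <= (n * D).+1)%N.
Proof.
apply: leq_trans (size_sum _ _ _) _; apply/bigmax_leqP => j _.
apply: leq_trans (size_scale_leq _ _) _; rewrite size_polyXn ltnS /mdeg.
apply: leq_trans (_ : (\sum_(a < n) D <= n * D)%N); last by rewrite sum_nat_const card_ord.
by apply: leq_sum => a _; rewrite -ltnS.
Qed.

Lemma exp_Tlam_sum (phi : coef_family R n) z tau N : bounded_support D phi ->
  (n * D < N)%N ->
  \sum_(k < N) ((-1) ^+ k / k`!%:R) * Tlam_pow lam k phi z tau =
  \sum_(j : idx) phi 0%N (mindex j) z tau * \prod_a (- (lam a)%:~R) ^+ (j a).
Proof.
move=> hb hN; set c : nidx -> C := fun j => phi 0%N j z tau.
have hc : bounded_coef c by move=> j hj; rewrite /c hb // hj orbT.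
have iter_dlam k j : iter k (dlam lam) phi 0%N j z tau = iter k dlam_coef c j.
  elim: k j => [|k IH] j //=; rewrite /dlam /dlam_coef; apply: eq_bigr => l _.
  by rewrite IH.
have Tlam_coef k : Tlam_pow lam k phi z tau = (lam_poly c)`_k *+ k`!.
  rewrite /Tlam_pow /qj_part iter_dlam -lam_poly_at0 lam_poly_iter_dlam //.
  by rewrite horner_coef0 coef_derivn addn0 ffactnn.
transitivity (\sum_(k < N) (lam_poly c)`_k * (-1) ^+ k).
  apply: eq_bigr => k _; rewrite Tlam_coef -mulr_natr.
  by field; rewrite pnatr_eq0 -lt0n fact_gt0.
rewrite -horner_coef_wide; last exact: leq_trans (size_lam_poly c) _.
rewrite /lam_poly horner_sum; apply: eq_bigr => j _.
rewrite hornerZ hornerXn -mulrA /lam_pow /mdeg expr_sum -big_split /=; congr (_ * _).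
by apply: eq_bigr => a _; rewrite -exprMn mulrN1.
Qed.

End TaylorSum.

(* phi in QJac_L = (+)_k QJac_{k,L}: phi = sum_{t < K} phi_t with phi_t of
   weight w t, completion (D, Phi t); T_lambda acts componentwise. *)
Theorem lemma3 (R : realType) (n : nat) (L : 'M[rat]_n) (hL : good_index L)
    (K : nat) (w : 'I_K -> int) (D : nat) (Phi : 'I_K -> coef_family R n)
    (hPhi : forall t, ah_weak_jacobi (w t) L D (Phi t))
    (lam mu : 'I_n -> int) (z : 'I_n -> R[i]) (tau : R[i]) (htau : 0 < im tau) :
  let phi := fun z tau => \sum_(t < K) qj_part (Phi t) z tau in
  exists N0 : nat, forall N : nat, (N0 <= N)%N ->
    phi (fun l => z l + (lam l)%:~R * tau + (mu l)%:~R) tau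
    = ee (- (Lq L (ivec lam) (ivec lam) * tau) - 2 * Lq L (ivec lam) z)
      * \sum_(i < N) ((-1) ^+ i / (i`!)%:R)
          * \sum_(t < K) Tlam_pow lam i (Phi t) z tau.
Proof.
move=> phi; exists (n * D).+1 => N hN.
rewrite /phi (eq_bigr _ (fun t _ => qj_part_translate lam mu z (hPhi t) htau)).
rewrite -mulr_sumr; congr (_ * _).
under [RHS]eq_bigr do rewrite mulr_sumr.
rewrite [RHS]exchange_big; apply: eq_bigr => t _.
by rewrite (exp_Tlam_sum (D := D)) //; case: (hPhi t).
Qed.
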